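(* Let $(G,\mathcal{T},(A^\circ,B^\circ),k)$ be a maximal Terminal Separation instance. If $A$ is a terminal-free $A^\circ$-extension with $d(A)-d(A^\circ)\le 0$, then $A=A^\circ$.
   Context: Graphs may have multiple edges but no loops; $d(A)$ is the number of edges with exactly one endpoint in $A$. For a family $\mathcal{T}$ of pairwise disjoint vertex pairs (terminals are their vertices), a terminal separation is a pair $(A,B)$ of disjoint vertex sets such that each pair in $\mathcal{T}$ either has one vertex in $A$ and one in $B$ or is disjoint from $A\cup B$; $(A',B')$ extends $(A,B)$ if $A\subseteq A'$, $B\subseteq B'$; cost $c(A,B)=(d(A)+d(B))/2$; $(A,B)$ is maximal if every other terminal separation extending it has strictly larger cost. A Terminal Separation instance $(G,\mathcal{T},(A^\circ,B^\circ),k)$ has every terminal of degree at most one and $(A^\circ,B^\circ)$ a terminal separation; it is maximal if $(A^\circ,B^\circ)$ is maximal. A set $A$ is an $A^\circ$-extension if $A^\circ\subseteq A\subseteq V(G)\setminus B^\circ$; it is terminal-free if $A\setminus A^\circ$ contains no terminal. *)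

From mathcomp Require Import all_boot all_order all_algebra.
Set Implicit Arguments. Unset Strict Implicit. Unset Printing Implicit Defensive.
Import GRing.Theory Num.Theory.

(* A finite multigraph without loops: vertex type V, edge type E, and an
   endpoint map [ends]; distinct edges may have the same endpoints. *)
Record multigraph (V : finType) := Multigraph {
  E : finType;
  ends : E -> V * V;
  noloop : forall e, (ends e).1 != (ends e).2
}.

Section Defs.
Variables (V : finType) (G : multigraph V).

Definition dcut (A : {set V}) : nat :=
  #|[set e : E G | ((ends e).1 \in A) != ((ends e).2 \in A)]|.

Definition deg (v : V) : nat :=
  #|[set e : E G | (v == (ends e).1) || (v == (ends e).2)]|.

(* A family of pairwise disjoint vertex pairs (each pair has two distinct
   vertices). A pair (u,v) represents the unordered pair {u,v}. *)
Definition pair_family (T : {set V * V}) : Prop :=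
  (forall p, p \in T -> p.1 != p.2) /\
  (forall p q, p \in T -> q \in T -> p != q ->
     [disjoint [set p.1; p.2] & [set q.1; q.2]]).

Definition terminals (T : {set V * V}) : {set V} :=
  [set v | [exists p in T, (v == p.1) || (v == p.2)]].

Definition terminal_separation (T : {set V * V}) (A B : {set V}) : Prop :=
  [disjoint A & B] /\
  forall p, p \in T ->
    ((p.1 \in A) && (p.2 \in B)) || ((p.1 \in B) && (p.2 \in A)) ||
    ((p.1 \notin A :|: B) && (p.2 \notin A :|: B)).

Definition extends (A B A' B' : {set V}) : Prop :=
  A \subset A' /\ B \subset B'.

Definition cost (A B : {set V}) : rat := ((dcut A + dcut B)%:R / 2%:R)%R.

Definition maximal_sep (T : {set V * V}) (A B : {set V}) : Prop :=
  forall A' B', terminal_separation T A' B' -> extends A B A' B' ->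
    (A', B') <> (A, B) -> (cost A B < cost A' B')%R.

Definition TS_instance (T : {set V * V}) (A0 B0 : {set V}) (k : nat) : Prop :=
  pair_family T /\
  (forall v, v \in terminals T -> deg v <= 1) /\
  terminal_separation T A0 B0.

Definition maximal_TS_instance (T : {set V * V}) (A0 B0 : {set V}) (k : nat) : Prop :=
  TS_instance T A0 B0 k /\ maximal_sep T A0 B0.

Definition extension (A0 B0 A : {set V}) : Prop :=
  A0 \subset A /\ A \subset ~: B0.

Definition terminal_free (T : {set V * V}) (A0 A : {set V}) : Prop :=
  [disjoint A :\: A0 & terminals T].

End Defs.

From mathcomp Require Import all_boot all_order all_algebra.
Set Implicit Arguments. Unset Strict Implicit. Unset Printing Implicit Defensive.
Import GRing.Theory Num.Theory.

(* Adding non-terminal vertices to the A-side keeps every terminal pair in its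
   place, so (A, B0) is again a terminal separation extending (A0, B0).  By
   maximality it costs strictly more, and since the B-side is unchanged this
   means d(A0) < d(A). *)

Section TerminalFreeExtension.
Variables (V : finType) (T : {set V * V}) (A0 B0 A : {set V}).

Lemma terminal_free_sub v :
  terminal_free T A0 A -> v \in terminals T -> v \in A -> v \in A0.
Proof.
rewrite /terminal_free disjoint_subset => /subsetP /(_ v) Hfree vT vA.
by apply: contraTT vT => vA0; apply: Hfree; rewrite !inE vA0.
Qed.

Lemma pair_terminals p : p \in T -> (p.1 \in terminals T) && (p.2 \in terminals T).
Proof. by move=> pT; rewrite !inE; apply/andP; split; apply/existsP; exists p; rewrite pT eqxx ?orbT. Qed.

Lemma terminal_separation_extension :
  terminal_separation T A0 B0 -> extension A0 B0 A -> terminal_free T A0 A ->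
  terminal_separation T A B0.
Proof.
move=> [_ Hsep] [A0A AB0] Hfree; split.
  by rewrite subsets_disjoint setCK in AB0.
move=> p pT; have /andP [p1T p2T] := pair_terminals pT.
have notA v : v \in terminals T -> v \notin A0 -> v \notin A.
  by move=> vT; apply: contra; apply: terminal_free_sub.
case/orP: (Hsep p pT) => [/orP [/andP [h1 h2] | /andP [h1 h2]] | /andP [h1 h2]].
- by rewrite (subsetP A0A _ h1) h2.
- by rewrite (subsetP A0A _ h2) h1 orbT.
- move: h1 h2; rewrite !inE !negb_or => /andP [h1 h1'] /andP [h2 h2'].
  by rewrite (negbTE (notA _ p1T h1)) (negbTE (notA _ p2T h2)) h1' h2' !orbT.
Qed.

End TerminalFreeExtension.

Lemma cost_ltl (V : finType) (G : multigraph V) (A A' B : {set V}) :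
  (cost G A B < cost G A' B)%R = (dcut G A < dcut G A').
Proof. by rewrite /cost ltr_pM2r ?invr_gt0 ?ltr0n // ltr_nat ltn_add2r. Qed.

Lemma maximal_sep_dcut_lt (V : finType) (G : multigraph V) (T : {set V * V})
    (A0 B0 A : {set V}) :
  maximal_sep G T A0 B0 -> terminal_separation T A B0 -> A0 \subset A ->
  A != A0 -> dcut G A0 < dcut G A.
Proof.
move=> Hmax Hsep A0A neqA; rewrite -(cost_ltl G _ _ B0).
apply: Hmax Hsep (conj A0A (subxx B0)) _.
by case=> eqA; rewrite eqA eqxx in neqA.
Qed.

Theorem lemma4p2 (V : finType) (G : multigraph V) (T : {set V * V})
  (A0 B0 : {set V}) (k : nat) (A : {set V}) :
  maximal_TS_instance G T A0 B0 k ->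
  extension A0 B0 A ->
  terminal_free T A0 A ->
  ((dcut G A)%:Z - (dcut G A0)%:Z <= 0)%R ->
  A = A0.
Proof.
move=> [[_ [_ Hsep0]] Hmax] Hext Hfree; rewrite subr_le0 lez_nat => Hd.
have HsepA := terminal_separation_extension Hsep0 Hext Hfree.
apply/eqP; apply: contraTT Hd => neqA; rewrite -ltnNge.
exact: maximal_sep_dcut_lt Hmax HsepA Hext.1 neqA.
Qed.
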